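(* Let $U$ be an $n\times n$ matrix whose entries are Laurent polynomials in $x$ over $\mathbb{C}$, such that $\det U$ is a nonzero constant (independent of $x$); then $U^{-1}$ also has Laurent polynomial entries. The following are equivalent: (i) there exist $n\times n$ matrices $T(x)$, with entries polynomial in $x$, and $S(x^{-1})$, with entries polynomial in $x^{-1}$, both having nonzero constant determinants, such that $U=T(x)\,S^{-1}(x^{-1})$; (ii) there exist $n$ column vectors $v_1(x),\dots,v_n(x)$ with entries polynomial in $x$, linearly independent over $\mathbb{C}(x)$, each satisfying $\mathrm{PP}_\infty\big(U^{-1}(x)v_i(x)\big)=0$. Moreover, when (ii) holds, taking $T$ to be the matrix with columns $v_1,\dots,v_n$ and $S=U^{-1}T$ gives a decomposition as in (i); and in any decomposition as in (i), the degree in $x$ of the entries of $T$ does not exceed the maximal power of $x$ occurring in the entries of $U$ (so the polynomial solutions $v$ of $\mathrm{PP}_\infty(U^{-1}v)=0$ relevant for (i) can be found by solving a finite linear system).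
   Context: For a Laurent polynomial (or vector/matrix of Laurent polynomials) $f(x)=\sum_k f_k x^k$, $\mathrm{PP}_\infty f$ denotes its principal part at $x=\infty$, namely $\sum_{k>0} f_k x^k$, the part containing strictly positive powers of $x$. *)

From HB Require Import structures.
From mathcomp Require Import all_boot all_order all_algebra.
Set Implicit Arguments. Unset Strict Implicit. Unset Printing Implicit Defensive.
Import Order.TTheory GRing.Theory Num.Theory.
Local Open Scope ring_scope.

(* Rational functions C(x) over the coefficient field F, realised as the
   fraction field of F[x].  Laurent polynomials, polynomials in x and
   polynomials in x^{-1} are subsets of this field. *)
Notation ratf F := {fraction {poly F}}.

Definition pK {F : numClosedFieldType} (p : {poly F}) : ratf F := tofrac p.

Definition xK {F : numClosedFieldType} : ratf F := pK 'X.

Definition is_polyX {F : numClosedFieldType} (f : ratf F) : Prop :=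
  exists p : {poly F}, f = pK p.

Definition is_polyXinv {F : numClosedFieldType} (f : ratf F) : Prop :=
  exists q : {poly F}, f = (map_poly (fun c : F => pK c%:P) q).[xK^-1].

Definition is_laurent {F : numClosedFieldType} (f : ratf F) : Prop :=
  exists (p : {poly F}) (k : nat), f = pK p / xK ^+ k.

Definition is_nzconst {F : numClosedFieldType} (f : ratf F) : Prop :=
  exists c : F, c != 0 /\ f = pK c%:P.

(* PP_oo f = 0 for a Laurent polynomial f: f contains no strictly positive
   power of x, i.e. f is a polynomial in x^{-1}. *)
Definition PPinf_zero {F : numClosedFieldType} (f : ratf F) : Prop :=
  is_polyXinv f.

Definition powers_le {F : numClosedFieldType} (f : ratf F) (m : int) : Prop :=
  is_polyXinv (xK ^ (- m) * f).

Definition TS_decomp {F : numClosedFieldType} (n : nat)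
    (U T S : 'M[ratf F]_n) : Prop :=
  [/\ forall i j, is_polyX (T i j),
      forall i j, is_polyXinv (S i j),
      is_nzconst (\det T),
      is_nzconst (\det S)
    & U = T *m invmx S].

(* Since det U is constant, U^{-1} = (det U)^{-1} adj U is again Laurent.
   (i) -> (ii): U^{-1} T = S, so the columns of T qualify.  (ii) -> (i): with
   S := U^{-1} V, the determinant det V = det U * det S is both a polynomial in
   x and a polynomial in x^{-1}; being nonzero it is a constant, and so is
   det S.  Degree bound: T = U S, and multiplying Laurent polynomials with all
   powers <= m by polynomials in x^{-1} keeps all powers <= m. *)

From HB Require Import structures.
From mathcomp Require Import all_boot all_order all_algebra.
From mathcomp Require Import zify.
Set Implicit Arguments.
Unset Strict Implicit.
Unset Printing Implicit Defensive.

Import Order.TTheory GRing.Theory Num.Theory.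
Local Open Scope ring_scope.

(* A Prop-valued analogue of [GRing.subring_closed]: the subsets of C(x)
   below are given by existential statements, not boolean predicates. *)
Definition subring_prop {R : pzRingType} (P : R -> Prop) : Prop :=
  [/\ P 1, forall x y, P x -> P y -> P (x - y)
         & forall x y, P x -> P y -> P (x * y)].

Section SubringProp.

Context {R : comNzRingType} {P : R -> Prop}.
Hypothesis Psub : subring_prop P.

Lemma subring_prop1 : P 1.
Proof. by case: Psub. Qed.

Lemma subring_propB x y : P x -> P y -> P (x - y).
Proof. by case: Psub => _ PB _; apply: PB. Qed.

Lemma subring_propM x y : P x -> P y -> P (x * y).
Proof. by case: Psub => _ _ PM; apply: PM. Qed.

Lemma subring_prop0 : P 0.
Proof. by rewrite -(subrr 1); apply: subring_propB; apply: subring_prop1. Qed.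

Lemma subring_propN x : P x -> P (- x).
Proof. by rewrite -sub0r; apply: subring_propB; apply: subring_prop0. Qed.

Lemma subring_propD x y : P x -> P y -> P (x + y).
Proof. by move=> Px Py; rewrite -[y]opprK; apply/subring_propB/subring_propN. Qed.

Lemma subring_propXn x k : P x -> P (x ^+ k).
Proof.
move=> Px; elim: k => [|k IHk]; first by rewrite expr0; apply: subring_prop1.
by rewrite exprS; apply: subring_propM.
Qed.

Lemma subring_prop_sign k : P ((-1) ^+ k).
Proof. by apply/subring_propXn/subring_propN/subring_prop1. Qed.

Lemma subring_prop_sum (I : Type) (r : seq I) (G : I -> R) :
  (forall i, P (G i)) -> P (\sum_(i <- r) G i).
Proof.
by move=> PG; apply: big_ind => //; [apply: subring_prop0 | apply: subring_propD].
Qed.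

Lemma subring_prop_prod (I : Type) (r : seq I) (G : I -> R) :
  (forall i, P (G i)) -> P (\prod_(i <- r) G i).
Proof.
by move=> PG; apply: big_ind => //; [apply: subring_prop1 | apply: subring_propM].
Qed.

Lemma subring_prop_det n (A : 'M[R]_n) : (forall i j, P (A i j)) -> P (\det A).
Proof.
move=> PA; apply: subring_prop_sum => s.
by apply: subring_propM; [apply: subring_prop_sign | apply: subring_prop_prod].
Qed.

End SubringProp.

Lemma subring_prop_invmx (R : comUnitRingType) (P : R -> Prop) n (A : 'M[R]_n) :
  subring_prop P -> (forall i j, P (A i j)) -> P (\det A)^-1 ->
  forall i j, P (invmx A i j).
Proof.
move=> Psub PA PdetV i j; rewrite /invmx; case: ifP => _; last exact: PA.
rewrite !mxE; apply: subring_propM => //; apply: subring_propM => //.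
  exact: subring_prop_sign.
by apply: subring_prop_det => // k l; rewrite !mxE.
Qed.

Lemma subring_prop_range (R S : nzRingType) (f : {rmorphism R -> S}) :
  subring_prop (fun y => exists x, y = f x).
Proof.
split; first by exists 1; rewrite rmorph1.
  by move=> _ _ [x ->] [y ->]; exists (x - y); rewrite rmorphB.
by move=> _ _ [x ->] [y ->]; exists (x * y); rewrite rmorphM.
Qed.

Lemma coef_mulXn_eq0 (R : nzSemiRingType) (t r : {poly R}) (a b e k : nat) :
  t * 'X^e = r * 'X^a -> (size r <= b)%N -> (b + a <= k + e)%N -> t`_k = 0.
Proof.
move=> E sr le; have := congr1 (fun p : {poly R} => p`_(k + e)) E.
rewrite /= !coefMXn ltnNge leq_addl addnK /= => ->.
have -> /= : (k + e < a)%N = false by lia.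
by apply: nth_default; lia.
Qed.

Section RationalFunctions.

Context {F : numClosedFieldType}.

Local Notation constK := (@tofrac {poly F} \o polyC).

Fact constK_comm : commr_rmorph constK xK^-1.
Proof. by move=> c; apply: mulrC. Qed.

Local Notation evalXinv := (horner_morph constK_comm).

Lemma xK_neq0 : xK != 0 :> ratf F.
Proof. by rewrite tofrac_eq0 polyX_eq0. Qed.

Lemma pK_inj : injective (@pK F).
Proof. by move=> p q /eqP; rewrite tofrac_eq => /eqP. Qed.

Lemma polyX_subring : subring_prop (@is_polyX F).
Proof. exact: subring_prop_range (@tofrac {poly F}). Qed.

Lemma polyXinv_subring : subring_prop (@is_polyXinv F).
Proof. exact: subring_prop_range evalXinv. Qed.

Lemma laurent_subring : subring_prop (@is_laurent F).
Proof.
have xKn k : xK ^+ k != 0 :> ratf F by exact: expf_neq0 xK_neq0.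
split.
- by exists 1, 0%N; rewrite expr0 divr1 /pK tofrac1.
- move=> _ _ [p [k ->]] [q [l ->]]; exists (p * 'X^l - q * 'X^k), (k + l)%N.
  rewrite -mulNr addf_div // exprD mulNr.
  by rewrite /pK tofracB !tofracM !tofracXn.
- move=> _ _ [p [k ->]] [q [l ->]]; exists (p * q), (k + l)%N.
  by rewrite mulf_div exprD /pK tofracM.
Qed.

Lemma polyX_laurent (f : ratf F) : is_polyX f -> is_laurent f.
Proof. by case=> p ->; exists p, 0%N; rewrite expr0 divr1. Qed.

Lemma nzconst_polyX (f : ratf F) : is_nzconst f -> is_polyX f.
Proof. by case=> c [_ ->]; exists c%:P. Qed.

Lemma nzconst_polyXinv (f : ratf F) : is_nzconst f -> is_polyXinv f.
Proof.
by case=> c [_ ->]; exists c%:P; rewrite -[RHS]/(evalXinv c%:P) horner_morphC.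
Qed.

Lemma nzconst_neq0 (f : ratf F) : is_nzconst f -> f != 0.
Proof. by case=> c [c0 ->]; rewrite tofrac_eq0 polyC_eq0. Qed.

Lemma nzconstM (f g : ratf F) :
  is_nzconst f -> is_nzconst g -> is_nzconst (f * g).
Proof.
case=> c [c0 ->] [d [d0 ->]]; exists (c * d).
by split; [rewrite mulf_neq0 | rewrite -(rmorphM constK)].
Qed.

Lemma nzconstV (f : ratf F) : is_nzconst f -> is_nzconst f^-1.
Proof. by case=> c [c0 ->]; exists c^-1; rewrite invr_eq0 -(fmorphV constK). Qed.

Lemma polyXinv_mulXn (f : ratf F) : is_polyXinv f ->
  exists (d : nat) (r : {poly F}), f * xK ^+ d = pK r /\ (size r <= d.+1)%N.
Proof.
case=> q ->; rewrite -[_.[_]]/(evalXinv q).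
elim/poly_ind: q => [|q c [d [r [Er sr]]]].
  by exists 0%N, 0; rewrite rmorph0 mul0r /pK tofrac0 size_poly0.
exists d.+1, (r + c *: 'X^(d.+1)); split.
  rewrite rmorphD rmorphM /= horner_morphX horner_morphC.
  rewrite mulrDl exprSr mulrA (mulrAC _ _ xK) divfK ?xK_neq0 // Er.
  by rewrite -exprSr /pK tofracD -mul_polyC tofracM tofracXn.
rewrite (leq_trans (size_polyD _ _)) // geq_max (leq_trans sr) //=.
by rewrite (leq_trans (size_scale_leq _ _)) // size_polyXn.
Qed.

Lemma powers_le_coef (t : {poly F}) (m : int) :
  powers_le (pK t) m -> forall k : nat, m < k%:Z -> t`_k = 0.
Proof.
move=> /polyXinv_mulXn [d [r [Er sr]]] k; case: m Er => a Er mk.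
- have E : t * 'X^d = r * 'X^a.
    apply: pK_inj; rewrite /pK !tofracM !tofracXn.
    rewrite -/(pK t) -/(pK r) -/(pK 'X) -/xK -Er -exprnN -mulrA (mulrC (xK ^- a)).
    by rewrite mulrA mulrAC divfK // expf_neq0 // xK_neq0.
  by apply: coef_mulXn_eq0 E sr _; move: mk; rewrite ltz_nat; lia.
- have E : t * 'X^(a.+1 + d) = r * 'X^0.
    apply: pK_inj; rewrite /pK !tofracM !tofracXn.
    rewrite -/(pK t) -/(pK r) -/(pK 'X) -/xK.
    by rewrite expr0 mulr1 -Er NegzE opprK -exprnP exprD mulrA (mulrC (pK t)).
  by apply: coef_mulXn_eq0 E sr _; lia.
Qed.

Lemma polyX_polyXinv_nzconst (f : ratf F) :
  is_polyX f -> is_polyXinv f -> f != 0 -> is_nzconst f.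
Proof.
move=> [t ->] tinv t0.
have tk k : (0 < k)%N -> t`_k = 0.
  by apply: (@powers_le_coef t 0); rewrite /powers_le oppr0 expr0z mul1r.
have Et : t = (t`_0)%:P by apply/polyP => -[|k]; rewrite coefC //= tk.
exists t`_0; split; last by rewrite {1}Et.
by apply: contraNneq t0 => t00; rewrite Et t00 /pK tofrac0.
Qed.

Section Matrices.

Context {n : nat}.

Lemma nzconst_unitmx (A : 'M[ratf F]_n) : is_nzconst (\det A) -> A \in unitmx.
Proof. by move/nzconst_neq0; rewrite unitmxE unitfE. Qed.

Lemma TS_decompE (U T S : 'M[ratf F]_n) : TS_decomp U T S -> T = U *m S.
Proof. by case=> _ _ _ /nzconst_unitmx Su ->; rewrite mulmxKV. Qed.

Lemma TS_decomp_of_cols (U V : 'M[ratf F]_n) :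
  is_nzconst (\det U) -> (forall i j, is_polyX (V i j)) -> row_free V^T ->
  (forall i j, is_polyXinv ((invmx U *m V) i j)) ->
  TS_decomp U V (invmx U *m V).
Proof.
move=> dU PV Vfree PS; have Uu : U \in unitmx by apply: nzconst_unitmx.
have Vu : V \in unitmx by rewrite -unitmx_tr -row_free_unit.
have dS : \det (invmx U *m V) = (\det U)^-1 * \det V by rewrite det_mulmx det_inv.
have dV : is_nzconst (\det V).
  apply: polyX_polyXinv_nzconst; first exact: (subring_prop_det polyX_subring PV).
    have -> : \det V = \det U * \det (invmx U *m V).
      by rewrite dS (mulVKf (nzconst_neq0 dU)).
    apply: (subring_propM polyXinv_subring (nzconst_polyXinv dU)).
    exact: (subring_prop_det polyXinv_subring PS).
  by rewrite -unitfE -unitmxE.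
split; [exact: PV | exact: PS | exact: dV | |].
  by rewrite dS; apply/nzconstM/dV/nzconstV.
have Su : invmx U *m V \in unitmx by rewrite unitmx_mul unitmx_inv Uu Vu.
by rewrite -{1}(mulKVmx Uu V) (mulmxK Su).
Qed.

Lemma powers_le_mulmx (m : int) (U S : 'M[ratf F]_n) :
  (forall i j, powers_le (U i j) m) -> (forall i j, is_polyXinv (S i j)) ->
  forall i j, powers_le ((U *m S) i j) m.
Proof.
move=> PU PS i j; rewrite /powers_le mxE mulr_sumr.
apply: (subring_prop_sum polyXinv_subring) => l; rewrite mulrA.
exact: (subring_propM polyXinv_subring (PU i l) (PS l j)).
Qed.

End Matrices.

End RationalFunctions.

Theorem mainTheorem4 (F : numClosedFieldType) (n : nat) (U : 'M[ratf F]_n)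
  (HU : forall i j, is_laurent (U i j))
  (Hdet : is_nzconst (\det U)) :
  (forall i j, is_laurent (invmx U i j)) /\
  ((exists T S : 'M[ratf F]_n, TS_decomp U T S) <->
   (exists V : 'M[ratf F]_n,
      [/\ forall i j, is_polyX (V i j),
          row_free V^T
        & forall i j, PPinf_zero ((invmx U *m V) i j)])) /\
  (forall V : 'M[ratf F]_n,
      (forall i j, is_polyX (V i j)) -> row_free V^T ->
      (forall i j, PPinf_zero ((invmx U *m V) i j)) ->
      TS_decomp U V (invmx U *m V)) /\
  (forall T S : 'M[ratf F]_n, TS_decomp U T S ->
     forall m : int, (forall i j, powers_le (U i j) m) ->
     forall i j (t : {poly F}), T i j = pK t ->
       forall k : nat, m < k%:Z -> t`_k = 0).
Proof.
have Uu : U \in unitmx by apply: nzconst_unitmx.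
split.
  apply: (subring_prop_invmx laurent_subring HU).
  exact/polyX_laurent/nzconst_polyX/nzconstV.
split; last split.
- split=> [[T [S TS]] | [V [PV Vfree PS]]]; last first.
    by exists V, (invmx U *m V); apply: TS_decomp_of_cols.
  exists T; have [PT PS dT _ _] := TS; split=> [//||i j].
    by rewrite row_free_unit unitmx_tr; apply: nzconst_unitmx.
  by rewrite (TS_decompE TS) mulKmx //; apply: PS.
- by move=> V; apply: TS_decomp_of_cols.
- move=> T S TS m PU i j t Tij; apply: powers_le_coef.
  by rewrite -Tij (TS_decompE TS); apply: powers_le_mulmx => //; case: TS.
Qed.
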